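(* Let $\mathcal{A}=\mathbb{C}[x_{1},x_{2},x_{3}]$, $P=x_{1}x_{2}x_{3}$, let $n_{1},n_{2},n_{3}$ be positive integers and $\alpha_{1},\alpha_{2},\alpha_{3}\in\mathbb{C}$ such that $$h=\alpha_{1}P^{n_{1}}+\alpha_{2}P^{n_{2}}+\alpha_{3}P^{n_{3}}$$ is reduced, and let $D=\{h=0\}$. Put $a_{i}=\alpha_{i}P^{n_{i}-1}$ and $$\delta^{1}=x_{1}\partial_{x_{1}}-x_{2}\partial_{x_{2}},\quad \delta^{2}=x_{2}\partial_{x_{2}}-x_{3}\partial_{x_{3}},\quad \delta^{3}=a_{1}x_{1}\partial_{x_{1}}+a_{2}x_{2}\partial_{x_{2}}+a_{3}x_{3}\partial_{x_{3}}.$$ Then $\delta^{1},\delta^{2},\delta^{3}$ form a free Saito basis of $Der_{\mathcal{A}}(\log D)$: each $\delta^{i}$ satisfies $\delta^{i}(h)\in h\mathcal{A}$, the determinant of the coefficient matrix $$\begin{pmatrix} x_{1}&0&a_{1}x_{1}\\ -x_{2}&x_{2}&a_{2}x_{2}\\ 0&-x_{3}&a_{3}x_{3}\end{pmatrix}$$ equals $h$, and $\{\delta^{1},\delta^{2},\delta^{3}\}$ is a free $\mathcal{A}$-basis of $Der_{\mathcal{A}}(\log D)$.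
   Context: $Der_{\mathcal{A}}(\log D)=\{\delta\in Der_{\mathcal{A}}:\delta(h)\in h\mathcal{A}\}$ is the module of logarithmic vector fields along $D$. *)

(* multinomials' mpoly over C := R[i] (real-closed complex),
   with R : realType, so C is (a copy of) the complex numbers. *)
From HB Require Import structures.
From mathcomp Require Import all_boot all_order all_algebra.
From mathcomp Require Import reals.
From mathcomp Require Import complex.
From mathcomp Require Import mpoly.
Set Implicit Arguments. Unset Strict Implicit. Unset Printing Implicit Defensive.
Import Order.TTheory GRing.Theory Num.Theory.
Local Open Scope ring_scope.

Notation A3 K := {mpoly K[3]}.

(* A K-derivation of A = K[x1,x2,x3] is determined by its coefficients:
   delta = \sum_i d i * \partial_{x_i}.  We represent it by d : 'I_3 -> A. *)
Definition der_apply (K : comNzRingType) (d : 'I_3 -> A3 K) (f : A3 K) : A3 K :=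
  \sum_(i < 3) d i * mderiv i f.

Definition mdvd (K : comNzRingType) (h f : A3 K) : Prop := exists q : A3 K, f = h * q.

Definition logder (K : comNzRingType) (h : A3 K) (d : 'I_3 -> A3 K) : Prop :=
  mdvd h (der_apply d h).

Definition reduced (K : comNzRingType) (h : A3 K) : Prop :=
  h != 0 /\ forall g q : A3 K, h = g * g * q -> (msize g <= 1)%N.

Definition coefmx (K : comNzRingType) (ds : 'I_3 -> 'I_3 -> A3 K) : 'M[A3 K]_3 :=
  \matrix_(i < 3, j < 3) ds j i.

Definition free_basis_logder (K : comNzRingType) (h : A3 K)
    (ds : 'I_3 -> 'I_3 -> A3 K) : Prop :=
  (forall j, logder h (ds j)) /\
  (forall d, logder h d ->
     exists c : 'I_3 -> A3 K, forall i, d i = \sum_(j < 3) c j * ds j i) /\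
  (forall c : 'I_3 -> A3 K,
     (forall i, \sum_(j < 3) c j * ds j i = 0) -> forall j, c j = 0).

Definition Pm (K : comNzRingType) : A3 K := 'X_0 * 'X_1 * 'X_2.

Definition hpoly (K : comNzRingType) (alpha : 'I_3 -> K) (n : 'I_3 -> nat) : A3 K :=
  \sum_(i < 3) alpha i *: Pm K ^+ n i.

Definition acoef (K : comNzRingType) (alpha : 'I_3 -> K) (n : 'I_3 -> nat) (i : 'I_3)
  : A3 K := alpha i *: Pm K ^+ (n i).-1.

(* delta^1 = x1 d1 - x2 d2, delta^2 = x2 d2 - x3 d3, delta^3 = sum a_i x_i d_i
   (indices shifted to 0,1,2) *)
Definition saito_ders (K : comNzRingType) (alpha : 'I_3 -> K) (n : 'I_3 -> nat)
  : 'I_3 -> 'I_3 -> A3 K :=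
  fun j i =>
    if j == 0 :> nat then
      (if i == 0 :> nat then 'X_i else if i == 1 :> nat then - 'X_i else 0)
    else if j == 1 :> nat then
      (if i == 1 :> nat then 'X_i else if i == 2 :> nat then - 'X_i else 0)
    else acoef alpha n i * 'X_i.

From HB Require Import structures.
From mathcomp Require Import all_boot all_order all_algebra.
From mathcomp Require Import reals complex mpoly ring.
Import Order.TTheory GRing.Theory Num.Theory.
Local Open Scope ring_scope.

(* Write h = Q(P) with Q = \sum_i alpha_i t^(n_i) in K[t].  As h is reduced, Q and Q'
   are coprime: a common root z would make (P - z)^2 divide h.  By the chain rule
   delta(h) = Q'(P) delta(P), so delta is logarithmic along h iff h divides delta(P).
   Since h = P (a_1 + a_2 + a_3) and delta(P) = \sum_i delta_i P / x_i, writing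
   delta(P) = h g forces delta_i = x_i e_i with e_1 + e_2 + e_3 = (a_1 + a_2 + a_3) g,
   and delta is then an explicit combination of delta^1, delta^2, delta^3.  These are
   independent because the determinant of their coefficient matrix is h, which is
   nonzero. *)

Definition i0 : 'I_3 := @Ordinal 3 0 isT.
Definition i1 : 'I_3 := @Ordinal 3 1 isT.
Definition i2 : 'I_3 := @Ordinal 3 2 isT.

Lemma ord3P (j : 'I_3) : [\/ j = i0, j = i1 | j = i2].
Proof.
by case: j => [[|[|[|//]]] ?]; [apply: Or31 | apply: Or32 | apply: Or33]; apply/val_inj.
Qed.

Lemma big_ord3 (V : nmodType) (F : 'I_3 -> V) : \sum_(i < 3) F i = F i0 + F i1 + F i2.
Proof.
rewrite !big_ord_recl big_ord0 addr0 addrA.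
by congr (F _ + F _ + F _); apply/val_inj.
Qed.

Lemma det_mx33 (R : comPzRingType) (A : 'M[R]_3) : \det A =
  A i0 i0 * A i1 i1 * A i2 i2 - A i0 i0 * A i1 i2 * A i2 i1
 - A i0 i1 * A i1 i0 * A i2 i2 + A i0 i1 * A i1 i2 * A i2 i0
 + A i0 i2 * A i1 i0 * A i2 i1 - A i0 i2 * A i1 i1 * A i2 i0.
Proof.
pose a i j := A (inord i) (inord j).
have AE (x y : 'I_3) : A x y = a x y by rewrite /a !inord_val.
rewrite !(expand_det_row _ ord0) !big_ord_recr big_ord0 /= /cofactor.
rewrite !(expand_det_row _ ord0) !big_ord_recr !big_ord0 /= /cofactor.
rewrite !det_mx11 !mxE !AE /=; ring.
Qed.

Lemma det_neq0_mulmx_eq0 (R : idomainType) m (A : 'M[R]_m) (c : 'cV[R]_m) :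
  \det A != 0 -> A *m c = 0 -> c = 0.
Proof.
move=> detA0 Ac0; apply/eqP; rewrite -[c == 0]orFb -(negbTE detA0) -scalemx_eq0.
by rewrite -mul_scalar_mx -mul_adj_mx -mulmxA Ac0 mulmx0.
Qed.

Section MpolyFacts.
Context {K : comNzRingType} {k : nat}.
Implicit Types (f g : {mpoly K[k]}) (p : {poly K}).

Lemma mderivX1 (i j : 'I_k) : mderiv j ('X_i : {mpoly K[k]}) = (i == j)%:R.
Proof.
rewrite mderivX mnm1E; case: eqP => [->|_]; last by rewrite scale0r.
rewrite (_ : U_(j) - U_(j) = 0)%MM ?mpolyX0 ?scale1r //.
by apply/mnmP => l; rewrite mnmBE subnn mnmE.
Qed.

Lemma mpolyX1_neq0 (i : 'I_k) : ('X_i : {mpoly K[k]}) != 0.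
Proof. by rewrite -msize_poly_eq0 msizeX. Qed.

Lemma mderiv_horner_map (j : 'I_k) p f :
  mderiv j ((map_poly (@mpolyC k K) p).[f])
  = (map_poly (@mpolyC k K) p^`()).[f] * mderiv j f.
Proof.
elim/poly_ind: p => [|p c IHp]; first by rewrite deriv0 !rmorph0 horner0 mderiv0 mul0r.
rewrite !derivE !rmorphD !rmorphM /= !map_polyC map_polyX !hornerE.
by rewrite mderivD mderivM IHp mderivC; ring.
Qed.

Lemma mpolyX1_dvd (i : 'I_k) f g (m : 'X_{1..k}) :
  m i = 0%N -> f * 'X_[m] = 'X_i * g -> exists e, f = 'X_i * e.
Proof.
move=> mi0 fXg.
have supp_i k' : k' \in msupp f -> (0 < k' i)%N.
  move=> fk'; have : (m + k')%MM \in msupp (f * 'X_[m]).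
    by rewrite (perm_mem (msuppMX f m)) map_f.
  rewrite fXg mulrC (perm_mem (msuppMX g _)) => /mapP [k'' _].
  move=> /(congr1 (fun l : 'X_{1..k} => l i)).
  by rewrite !mnmDE mi0 mnm1E eqxx add0n => ->.
exists (\sum_(k' <- msupp f) f@_k' *: 'X_[k' - U_(i)]).
rewrite mulr_sumr {1}(mpolyE f); apply: eq_big_seq => k' fk'.
rewrite -scalerAr -mpolyXD addmC submK //; apply/mnm_lepP => j; rewrite mnm1E.
by case: eqP => [<-|]; [exact: supp_i|].
Qed.

End MpolyFacts.

Section Pm.
Variable K : comNzRingType.

Lemma PmE : Pm K = 'X_i0 * 'X_i1 * 'X_i2.
Proof. by rewrite /Pm; congr (_ * _ * _); congr mpolyX; congr mnm1; apply/val_inj. Qed.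

Definition evalPm : {poly K} -> A3 K :=
  horner_morph (fun a : K => mulrC (Pm K) a%:MP).

HB.instance Definition _ := GRing.RMorphism.on evalPm.

Lemma evalPmX : evalPm 'X = Pm K. Proof. exact: horner_morphX. Qed.
Lemma evalPmC (c : K) : evalPm c%:P = c%:MP. Proof. exact: horner_morphC. Qed.

Lemma der_apply_evalPm (d : 'I_3 -> A3 K) (p : {poly K}) :
  der_apply d (evalPm p) = evalPm p^`() * der_apply d (Pm K).
Proof.
rewrite /der_apply mulr_sumr; apply: eq_bigr => i _.
by rewrite /evalPm /horner_morph mderiv_horner_map mulrCA.
Qed.

Lemma der_apply_Pm (d : 'I_3 -> A3 K) : der_apply d (Pm K) =
  d i0 * ('X_i1 * 'X_i2) + d i1 * ('X_i0 * 'X_i2) + d i2 * ('X_i0 * 'X_i1).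
Proof. rewrite /der_apply big_ord3 PmE !mderivM !mderivX1 /=; ring. Qed.

End Pm.

Section PmDomain.
Variable K : idomainType.

Lemma Pm_neq0 : Pm K != 0.
Proof. by rewrite PmE !mulf_neq0 ?mpolyX1_neq0. Qed.

Lemma msize_Pm_subC (c : K) : (1 < msize (Pm K - c%:MP))%N.
Proof.
rewrite ltnNge; apply/negP => /msize1_polyC /(congr1 (mderiv i0)).
rewrite mderivB !mderivC PmE !mderivM !mderivX1 /= !mulr0 !addr0 mul1r subr0.
by apply/eqP; rewrite mulf_eq0 !(negbTE (mpolyX1_neq0 _)).
Qed.

Lemma der_apply_Pm_dvd (d : 'I_3 -> A3 K) (g : A3 K) :
  der_apply d (Pm K) = Pm K * g ->
  exists e0 e1 e2, [/\ d i0 = 'X_i0 * e0, d i1 = 'X_i1 * e1, d i2 = 'X_i2 * e2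
                     & g = e0 + e1 + e2].
Proof.
rewrite der_apply_Pm PmE => dPg.
have /eqP := dPg; rewrite -subr_eq0 => /eqP dPg0.
have [e0 de0] : exists e, d i0 = 'X_i0 * e.
  apply: (@mpolyX1_dvd _ _ i0 _ ('X_i1 * 'X_i2 * g - d i1 * 'X_i2 - d i2 * 'X_i1)
            (U_(i1) + U_(i2))%MM); first by rewrite mnmDE !mnm1E.
  by rewrite mpolyXD; apply/subr0_eq; rewrite -dPg0; ring.
have [e1 de1] : exists e, d i1 = 'X_i1 * e.
  apply: (@mpolyX1_dvd _ _ i1 _ ('X_i0 * 'X_i2 * g - d i0 * 'X_i2 - d i2 * 'X_i0)
            (U_(i0) + U_(i2))%MM); first by rewrite mnmDE !mnm1E.
  by rewrite mpolyXD; apply/subr0_eq; rewrite -dPg0; ring.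
have [e2 de2] : exists e, d i2 = 'X_i2 * e.
  apply: (@mpolyX1_dvd _ _ i2 _ ('X_i0 * 'X_i1 * g - d i0 * 'X_i1 - d i1 * 'X_i0)
            (U_(i0) + U_(i1))%MM); first by rewrite mnmDE !mnm1E.
  by rewrite mpolyXD; apply/subr0_eq; rewrite -dPg0; ring.
exists e0, e1, e2; split=> //; apply: (mulfI Pm_neq0).
by rewrite PmE -dPg de0 de1 de2; ring.
Qed.

End PmDomain.

Lemma coprimep_of_reduced (K : closedFieldType) (p : {poly K}) :
  reduced (evalPm K p) -> coprimep p p^`().
Proof.
move=> [_ hred]; apply: contraT => /closed_rootP [z]; rewrite root_gcd => /andP [pz p'z].
have [r pE] := factor_theorem _ _ pz.
move: p'z; rewrite pE derivM derivXsubC mulr1 rootE !hornerE subrr mulr0 add0r.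
move=> /factor_theorem [r2 rE].
have evalPm_XsubC : evalPm K ('X - z%:P) = Pm K - z%:MP.
  by rewrite rmorphB /= evalPmX evalPmC.
move: (hred (Pm K - z%:MP) (evalPm K r2)); rewrite leqNgt msize_Pm_subC; apply.
by rewrite pE rE !rmorphM /= evalPm_XsubC; ring.
Qed.

Lemma logder_evalPm (K : fieldType) (p : {poly K}) (d : 'I_3 -> A3 K) :
  coprimep p p^`() -> logder (evalPm K p) d <-> mdvd (evalPm K p) (der_apply d (Pm K)).
Proof.
move=> /Bezout_eq1_coprimepP [[u v] /= uv1]; rewrite /logder /mdvd der_apply_evalPm.
set dP := der_apply d (Pm K).
split=> [[q dhq] | [q dPq]]; last by exists (evalPm K p^`() * q); rewrite dPq; ring.
exists (evalPm K u * dP + evalPm K v * q).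
have Bezout1 : evalPm K u * evalPm K p + evalPm K v * evalPm K p^`() = 1.
  by rewrite -!rmorphM -rmorphD uv1 rmorph1.
by rewrite -[LHS]mul1r -Bezout1 mulrDl -[X in _ + X]mulrA dhq; ring.
Qed.

Section Saito.
Context {K : fieldType} (alpha : 'I_3 -> K) (n : 'I_3 -> nat).
Local Notation h := (hpoly alpha n).
Local Notation ds := (saito_ders alpha n).

Definition Qpoly : {poly K} := \sum_(i < 3) alpha i *: 'X^(n i).

Definition asum : A3 K := \sum_(i < 3) acoef alpha n i.

Lemma evalPm_Qpoly : evalPm K Qpoly = h.
Proof.
rewrite rmorph_sum; apply: eq_bigr => i _.
by rewrite -mul_polyC rmorphM /= evalPmC rmorphXn /= evalPmX mul_mpolyC.
Qed.

Lemma der_apply_hpoly (d : 'I_3 -> A3 K) :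
  der_apply d h = evalPm K Qpoly^`() * der_apply d (Pm K).
Proof. by rewrite -evalPm_Qpoly der_apply_evalPm. Qed.

Hypothesis n_gt0 : forall i, (0 < n i)%N.

Lemma hpoly_Pm_asum : h = Pm K * asum.
Proof.
rewrite mulr_sumr; apply: eq_bigr => i _.
by rewrite /acoef -scalerAr -exprS prednK.
Qed.

Lemma saito_logder j : logder h (ds j).
Proof.
rewrite /logder /mdvd der_apply_hpoly der_apply_Pm.
case: (ord3P j) => ->; rewrite /saito_ders /=.
- by exists 0; ring.
- by exists 0; ring.
- by exists (evalPm K Qpoly^`()); rewrite hpoly_Pm_asum PmE /asum big_ord3; ring.
Qed.

Lemma det_saito : \det (coefmx ds) = h.
Proof.
by rewrite det_mx33 !mxE /saito_ders /= hpoly_Pm_asum /asum big_ord3 PmE; ring.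
Qed.

Lemma saito_free : h != 0 ->
  forall c : 'I_3 -> A3 K, (forall i, \sum_(j < 3) c j * ds j i = 0) -> forall j, c j = 0.
Proof.
move=> h_neq0 c cds0 j.
have /matrixP/(_ j 0) : \col_j c j = 0.
  apply: det_neq0_mulmx_eq0 (coefmx ds) _ _ _; first by rewrite det_saito.
  apply/matrixP => i l; rewrite !mxE -[RHS](cds0 i).
  by apply: eq_bigr => j' _; rewrite !mxE mulrC.
by rewrite !mxE.
Qed.

Lemma saito_span : coprimep Qpoly Qpoly^`() ->
  forall d, logder h d -> exists c, forall i, d i = \sum_(j < 3) c j * ds j i.
Proof.
move=> Qcop d; rewrite -evalPm_Qpoly (logder_evalPm _ _ d Qcop).
rewrite evalPm_Qpoly hpoly_Pm_asum.
move=> [g]; rewrite -mulrA => /der_apply_Pm_dvd [e0 [e1 [e2 [de0 de1 de2 e_sum]]]].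
(* solves c_0 + g a_0 = e_0, c_1 - c_0 + g a_1 = e_1 and c_2 = g *)
exists (fun j => if j == i0 then e0 - g * acoef alpha n i0
  else if j == i1 then e0 + e1 - g * (acoef alpha n i0 + acoef alpha n i1) else g).
move=> i; rewrite big_ord3 /=; case: (ord3P i) => ->; rewrite /saito_ders /=.
- by rewrite de0; ring.
- by rewrite de1; ring.
- have e2E : e2 = asum * g - e0 - e1 by rewrite e_sum; ring.
  by rewrite de2 e2E /asum big_ord3; ring.
Qed.

End Saito.

Theorem mainTheorem5 (R : realType) (n : 'I_3 -> nat) (alpha : 'I_3 -> R[i])
  (hn : forall i, (0 < n i)%N)
  (hred : reduced (hpoly alpha n)) :
  (forall j, logder (hpoly alpha n) (saito_ders alpha n j)) /\
  \det (coefmx (saito_ders alpha n)) = hpoly alpha n /\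
  free_basis_logder (hpoly alpha n) (saito_ders alpha n).
Proof.
have Qcop : coprimep (Qpoly alpha n) (Qpoly alpha n)^`().
  by apply: coprimep_of_reduced; rewrite evalPm_Qpoly.
split; first exact: saito_logder.
split; first exact: det_saito.
split; first exact: saito_logder.
by split; [exact: saito_span | exact: saito_free hred.1].
Qed.
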